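(* Let $\mathcal{C}$ be an additive category with an automorphism $\Sigma$, let $n\ge 3$, and let $\mathscr{N}$ be a collection of $n$-$\Sigma$-sequences in $\mathcal{C}$ satisfying the axioms (N1)(b), (N2* ) and (N3). Then every $n$-$\Sigma$-sequence in $\mathscr{N}$ is exact.
   Context: $\mathcal{C}$ is an additive category, $\Sigma\colon\mathcal{C}\to\mathcal{C}$ an automorphism, and $n\ge 3$ an integer. An $n$-$\Sigma$-sequence $A_\bullet$ is a diagram $A_1\xrightarrow{\alpha_1}A_2\xrightarrow{\alpha_2}\cdots\xrightarrow{\alpha_{n-1}}A_n\xrightarrow{\alpha_n}\Sigma A_1$ in $\mathcal{C}$. It is exact if for every object $B$ of $\mathcal{C}$ the doubly infinite sequence of abelian groups $\cdots\to\mathrm{Hom}(B,\Sigma^{i-1}A_n)\xrightarrow{(\Sigma^{i-1}\alpha_n)_*}\mathrm{Hom}(B,\Sigma^iA_1)\xrightarrow{(\Sigma^i\alpha_1)_*}\mathrm{Hom}(B,\Sigma^iA_2)\to\cdots\xrightarrow{(\Sigma^i\alpha_{n-1})_*}\mathrm{Hom}(B,\Sigma^iA_n)\xrightarrow{(\Sigma^i\alpha_n)_*}\mathrm{Hom}(B,\Sigma^{i+1}A_1)\to\cdots$ ($i\in\mathbb{Z}$) is exact. The left rotation of $A_\bullet$ is $A_2\xrightarrow{\alpha_2}A_3\to\cdots\xrightarrow{\alpha_n}\Sigma A_1\xrightarrow{(-1)^n\Sigma\alpha_1}\Sigma A_2$. A morphism $A_\bullet\to B_\bullet$ of $n$-$\Sigma$-sequences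 (with $B_\bullet$ having maps $\beta_i$) is a tuple $(\varphi_1,\dots,\varphi_n)$ of morphisms $\varphi_i\colon A_i\to B_i$ with $\varphi_{i+1}\alpha_i=\beta_i\varphi_i$ for $1\le i\le n-1$ and $\Sigma\varphi_1\circ\alpha_n=\beta_n\circ\varphi_n$. Axioms for a collection $\mathscr{N}$ of $n$-$\Sigma$-sequences: (N1)(b): for every object $A$, the trivial sequence $A\xrightarrow{1}A\to0\to\cdots\to0\to\Sigma A$ belongs to $\mathscr{N}$. (N2* ): the left rotation of every sequence in $\mathscr{N}$ belongs to $\mathscr{N}$. (N3): given $A_\bullet,B_\bullet\in\mathscr{N}$ and morphisms $\varphi_1\colon A_1\to B_1$, $\varphi_2\colon A_2\to B_2$ with $\varphi_2\alpha_1=\beta_1\varphi_1$, there exist $\varphi_3,\dots,\varphi_n$ such that $(\varphi_1,\dots,\varphi_n)$ is a morphism of $n$-$\Sigma$-sequences. *)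

From HB Require Import structures.
From mathcomp Require Import all_boot all_algebra.
Set Implicit Arguments.
Unset Strict Implicit.
Unset Printing Implicit Defensive.
Import GRing.Theory.
Local Open Scope ring_scope.

Record addcat := AddCat {
  obj : Type;
  mor : obj -> obj -> zmodType;
  cmp : forall X Y Z : obj, mor Y Z -> mor X Y -> mor X Z;
  idm : forall X : obj, mor X X;
  cmpA : forall (X Y Z W : obj) (h : mor Z W) (g : mor Y Z) (f : mor X Y),
      cmp h (cmp g f) = cmp (cmp h g) f;
  comp1m : forall (X Y : obj) (f : mor X Y), cmp (idm Y) f = f;
  compm1 : forall (X Y : obj) (f : mor X Y), cmp f (idm X) = f;
  compDl : forall (X Y Z : obj) (g1 g2 : mor Y Z) (f : mor X Y),
      cmp (g1 + g2) f = cmp g1 f + cmp g2 f;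
  compDr : forall (X Y Z : obj) (g : mor Y Z) (f1 f2 : mor X Y),
      cmp g (f1 + f2) = cmp g f1 + cmp g f2;
  zobj : obj;
  zobj_init : forall (X : obj) (f : mor zobj X), f = 0;
  zobj_term : forall (X : obj) (f : mor X zobj), f = 0;
  biprod : forall X Y : obj, exists (P : obj) (i1 : mor X P) (i2 : mor Y P)
      (p1 : mor P X) (p2 : mor P Y),
      [/\ cmp p1 i1 = idm X, cmp p2 i2 = idm Y, cmp p2 i1 = 0,
          cmp p1 i2 = 0 & cmp i1 p1 + cmp i2 p2 = idm P]
}.
Arguments cmp {a X Y Z}.
Arguments idm {a}.
Arguments zobj {a}.

Definition tr (C : addcat) (X X' Y Y' : obj C) (e1 : X = X') (e2 : Y = Y')
  (f : mor X Y) : mor X' Y' :=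
  match e1 in _ = X1, e2 in _ = Y1 return mor X1 Y1 with
  | erefl, erefl => f end.

Record autom (C : addcat) := Autom {
  So : obj C -> obj C;
  Sm : forall X Y : obj C, mor X Y -> mor (So X) (So Y);
  Sm_id : forall X, Sm (idm X) = idm (So X);
  Sm_comp : forall X Y Z (g : mor Y Z) (f : mor X Y),
      Sm (cmp g f) = cmp (Sm g) (Sm f);
  Sm_add : forall X Y (f g : mor X Y), Sm (f + g) = Sm f + Sm g;
  Io : obj C -> obj C;
  Im : forall X Y : obj C, mor X Y -> mor (Io X) (Io Y);
  Im_id : forall X, Im (idm X) = idm (Io X);
  Im_comp : forall X Y Z (g : mor Y Z) (f : mor X Y),
      Im (cmp g f) = cmp (Im g) (Im f);
  Im_add : forall X Y (f g : mor X Y), Im (f + g) = Im f + Im g;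
  SIo : forall X, So (Io X) = X;
  ISo : forall X, Io (So X) = X;
  SIm : forall X Y (f : mor X Y), tr (SIo X) (SIo Y) (Sm (Im f)) = f;
  ISm : forall X Y (f : mor X Y), tr (ISo X) (ISo Y) (Im (Sm f)) = f
}.
Arguments So {C}.
Arguments Sm {C} a {X Y}.
Arguments Io {C}.
Arguments Im {C} a {X Y}.

Fixpoint itero (C : addcat) (fo : obj C -> obj C) (k : nat) (X : obj C) : obj C :=
  match k with 0 => X | k'.+1 => fo (itero fo k' X) end.
Fixpoint iterm (C : addcat) (fo : obj C -> obj C)
  (fm : forall X Y : obj C, mor X Y -> mor (fo X) (fo Y)) (k : nat)
  (X Y : obj C) (f : mor X Y) : mor (itero fo k X) (itero fo k Y) :=
  match k with 0 => f | k'.+1 => fm _ _ (iterm fm k' f) end.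

(* Sigma^i for i : int  (Negz k = -(k+1)) *)
Definition powo (C : addcat) (S : autom C) (i : int) (X : obj C) : obj C :=
  match i with
  | Posz k => itero (So S) k X
  | Negz k => itero (Io S) k.+1 X end.
Definition powm (C : addcat) (S : autom C) (i : int) (X Y : obj C) (f : mor X Y)
  : mor (powo S i X) (powo S i Y) :=
  match i with
  | Posz k => iterm (fun X Y => @Sm C S X Y) k f
  | Negz k => iterm (fun X Y => @Im C S X Y) k.+1 f end.

(* chain Z X m : a string of m composable morphisms from X to Z *)
Inductive chain (C : addcat) (Z : obj C) : obj C -> nat -> Type :=
| cnil : chain Z Z 0
| ccons (X Y : obj C) (m : nat) : mor X Y -> chain Z Y m -> chain Z X m.+1.
Arguments cnil {C Z}.
Arguments ccons {C Z X Y m}.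

Fixpoint snoc (C : addcat) (Z X : obj C) (m : nat) (p : chain Z X m)
  (W : obj C) (g : mor Z W) : chain W X m.+1 :=
  match p in chain _ X' m' return chain W X' m'.+1 with
  | cnil => ccons g cnil
  | ccons _ _ _ f p' => ccons f (snoc p' g)
  end.

Definition chain_dec (C : addcat) (Z X : obj C) (m : nat) (c : chain Z X m.+1)
  : {Y : obj C & (mor X Y * chain Z Y m)%type} :=
  match c in chain _ X' k
    return (match k with 0 => unit
            | k'.+1 => {Y : obj C & (mor X' Y * chain Z Y k')%type} end) with
  | cnil => tt
  | ccons _ Y _ f p => existT _ Y (f, p)
  end.

Fixpoint zchain (C : addcat) (m : nat) : chain (@zobj C) (@zobj C) m :=
  match m with 0 => cnil | m'.+1 => ccons 0 (zchain C m') end.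

(* commutative ladders between two chains of the same length:
   ladder p q phi chi  with phi the vertical map at the start, chi at the end *)
Inductive ladder (C : addcat) : forall (Z Z' X X' : obj C) (m : nat),
    chain Z X m -> chain Z' X' m -> mor X X' -> mor Z Z' -> Prop :=
| lad_nil (Z Z' : obj C) (phi : mor Z Z') : ladder cnil cnil phi phi
| lad_cons (Z Z' X X' Y Y' : obj C) (m : nat) (f : mor X Y) (g : mor X' Y')
    (p : chain Z Y m) (q : chain Z' Y' m) (phi : mor X X') (psi : mor Y Y')
    (chi : mor Z Z') :
    cmp psi f = cmp g phi -> ladder p q psi chi ->
    ladder (ccons f p) (ccons g q) phi chi.

Inductive cpairs (C : addcat)
    (P : forall X Y W : obj C, mor X Y -> mor Y W -> Prop)
    : forall (Z X : obj C) (m : nat), chain Z X m -> Prop :=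
| cp0 (Z : obj C) : cpairs P (@cnil C Z)
| cp1 (Z X : obj C) (f : mor X Z) : cpairs P (ccons f cnil)
| cp2 (Z X Y W : obj C) (m : nat) (f : mor X Y) (g : mor Y W) (p : chain Z W m) :
    P X Y W f g -> cpairs P (ccons g p) -> cpairs P (ccons f (ccons g p)).

(* ---------- n-Sigma-sequences, with n = l + 2 ---------- *)
(* A1 --a1--> A2 --rest (l maps)--> An --an--> Sigma A1 *)
Record sseq (C : addcat) (S : autom C) (l : nat) := SSeq {
  s1 : obj C; s2 : obj C; sn : obj C;
  sa1 : mor s1 s2;
  srest : chain sn s2 l;
  san : mor sn (So S s1)
}.
Arguments s1 {C S l}. Arguments s2 {C S l}. Arguments sn {C S l}.
Arguments sa1 {C S l}. Arguments srest {C S l}. Arguments san {C S l}.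

(* exactness of Hom(B,-) applied to X --f--> Y --g--> W, at Hom(B,Y) *)
Definition exact_at (C : addcat) (B X Y W : obj C) (f : mor X Y) (g : mor Y W)
  : Prop :=
  (forall h : mor B X, cmp g (cmp f h) = 0) /\
  (forall h : mor B Y, cmp g h = 0 -> exists k : mor B X, h = cmp f k).

Definition ext_chain (C : addcat) (S : autom C) (l : nat) (s : sseq S l)
  : chain (So S (s2 s)) (s1 s) (l.+3) :=
  ccons (sa1 s) (snoc (snoc (srest s) (san s)) (Sm S (sa1 s))).

(* exactness of the doubly infinite Hom(B, Sigma^i -) sequence: exactness at
   every term; Hom(B,Sigma^{i+1} A1) is written Hom(B,Sigma^i (Sigma A1)) *)
Definition exact_sseq (C : addcat) (S : autom C) (l : nat) (s : sseq S l)
  : Prop :=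
  forall (i : int) (B : obj C),
    cpairs (fun X Y W (f : mor X Y) (g : mor Y W) =>
              exact_at B (powm S i f) (powm S i g)) (ext_chain s).

(* left rotation, for n = l + 3 *)
Definition rotate (C : addcat) (S : autom C) (l : nat) (s : sseq S l.+1)
  : sseq S l.+1 :=
  let d := chain_dec (srest s) in
  @SSeq C S l.+1 (s2 s) (projT1 d) (So S (s1 s)) (projT2 d).1
        (snoc (projT2 d).2 (san s))
        (Sm S (sa1 s) *~ ((-1) ^+ (l.+3) : int)).

Definition trivseq (C : addcat) (S : autom C) (l : nat) (A : obj C)
  : sseq S l.+1 :=
  @SSeq C S l.+1 A A zobj (idm A) (ccons 0 (zchain C l)) 0.

Definition extends_to_morphism (C : addcat) (S : autom C) (l : nat)
  (a b : sseq S l) (phi1 : mor (s1 a) (s1 b)) (phi2 : mor (s2 a) (s2 b)) : Prop :=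
  exists phin : mor (sn a) (sn b),
    ladder (srest a) (srest b) phi2 phin /\
    cmp (Sm S phi1) (san a) = cmp (san b) phin.
Arguments extends_to_morphism {C S l} a b phi1 phi2.
Arguments exact_sseq {C S l} s.
Arguments rotate {C S l} s.
Arguments trivseq {C} S l A.

(* Two morphisms of sequences out of members of N given by axioms N1(b) and N2*
   do all the work.  Mapping the trivial sequence on A1 to (A1, A2, ...) with
   vertical maps (1, a1) forces a2 a1 = 0, since the trivial sequence has a
   zero after its second term.  Mapping the rotated trivial sequence on B to
   the rotation of (A1, A2, ...) with vertical maps (h, 0), for h : B -> A2
   killed by a2, produces a last vertical map Sigma B -> Sigma A1 through which
   Sigma h factors over Sigma a1; desuspending, h factors through a1.  Hence
   Hom(B, -) is exact at A2 for every member of N, and, N being closed under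
   rotation, at every later term as well.  Finally Sigma is an automorphism,
   so exactness of Hom(B, -) for all B carries over to Hom(B, Sigma^i -). *)
From mathcomp Require Import all_boot all_algebra.
From Stdlib Require Import ProofIrrelevance.
Set Implicit Arguments.
Unset Strict Implicit.
Unset Printing Implicit Defensive.
Import GRing.Theory.
Local Open Scope ring_scope.

Lemma additive0 (M M' : zmodType) (F : M -> M') :
  {morph F : a b / a + b} -> F 0 = 0.
Proof. by move=> FD; apply: (addrI (F 0)); rewrite -FD !addr0. Qed.

Lemma additiveN (M M' : zmodType) (F : M -> M') :
  {morph F : a b / a + b} -> {morph F : a / - a}.
Proof. by move=> FD a; apply: (addrI (F a)); rewrite -FD !subrr additive0. Qed.

Lemma mulrz_sign (M : zmodType) (x : M) (k : nat) :
  x *~ ((-1) ^+ k : int) = if odd k then - x else x.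
Proof. by rewrite -signr_odd; case: (odd k); rewrite ?mulrN1z ?mulr1z. Qed.

Section AdditiveCategory.
Variable C : addcat.
Implicit Types X Y Z W B : obj C.

Lemma cmp0m X Y Z (f : mor X Y) : cmp (0 : mor Y Z) f = 0.
Proof. exact: additive0 (fun g1 g2 => compDl g1 g2 f). Qed.

Lemma cmpm0 X Y Z (g : mor Y Z) : cmp g (0 : mor X Y) = 0.
Proof. exact: additive0 (compDr g). Qed.

Lemma cmpNm X Y Z (g : mor Y Z) (f : mor X Y) : cmp (- g) f = - cmp g f.
Proof. exact: additiveN (fun g1 g2 => compDl g1 g2 f) g. Qed.

Lemma cmpmN X Y Z (g : mor Y Z) (f : mor X Y) : cmp g (- f) = - cmp g f.
Proof. exact: additiveN (compDr g) f. Qed.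

Lemma tr_cmp X X' Y Y' Z Z' (e1 : X = X') (e2 : Y = Y') (e3 : Z = Z')
    (g : mor Y Z) (f : mor X Y) :
  tr e1 e3 (cmp g f) = cmp (tr e2 e3 g) (tr e1 e2 f).
Proof. by case: _ / e1; case: _ / e2; case: _ / e3. Qed.

Lemma tr0 X X' Y Y' (e1 : X = X') (e2 : Y = Y') : tr e1 e2 (0 : mor X Y) = 0.
Proof. by case: _ / e1; case: _ / e2. Qed.

Lemma tr_eq0 X X' Y Y' (e1 : X = X') (e2 : Y = Y') (f : mor X Y) :
  tr e1 e2 f = 0 -> f = 0.
Proof. by case: _ / e1; case: _ / e2. Qed.

Lemma tr_tr X X' Y Y' (e1 : X = X') (e2 : Y = Y') (f : mor X Y) :
  tr e1 (erefl Y') (tr (erefl X) e2 f) = tr e1 e2 f.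
Proof. by case: _ / e1; case: _ / e2. Qed.

Definition hom_exact X Y W (f : mor X Y) (g : mor Y W) : Prop :=
  forall B, exact_at B f g.

Lemma exact_at_oppr B X Y W (f : mor X Y) (g : mor Y W) :
  exact_at B f (- g) -> exact_at B f g.
Proof.
case=> gf0 ker; split=> [h|h gh0].
  by apply: oppr_inj; rewrite -cmpNm gf0 oppr0.
by apply: ker; rewrite cmpNm gh0 oppr0.
Qed.

Lemma exact_at_signr B X Y W (f : mor X Y) (g : mor Y W) (k : nat) :
  exact_at B f (g *~ ((-1) ^+ k : int)) -> exact_at B f g.
Proof. by rewrite mulrz_sign; case: (odd k) => //; apply: exact_at_oppr. Qed.

End AdditiveCategory.

Section Automorphism.
Variables (C : addcat) (S : autom C).
Implicit Types X Y Z W B : obj C.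

Definition inv_autom : autom C :=
  Autom (Im_id S) (Im_comp S) (Im_add S) (Sm_id S) (Sm_comp S) (Sm_add S)
        (ISm S) (SIm S).

Lemma Sm0 X Y : Sm S (0 : mor X Y) = 0.
Proof. exact: additive0 (Sm_add S (X := X) (Y := Y)). Qed.

Lemma Sm_tr X X' Y Y' (e1 : X = X') (e2 : Y = Y') (f : mor X Y) :
  Sm S (tr e1 e2 f) = tr (f_equal (So S) e1) (f_equal (So S) e2) (Sm S f).
Proof. by case: _ / e1; case: _ / e2. Qed.

Lemma Sm_eq0 X Y (f : mor X Y) : Sm S f = 0 -> f = 0.
Proof.
move=> Sf0; rewrite -(ISm S f) Sf0.
by rewrite (additive0 (Im_add S (X := So S X) (Y := So S Y))) tr0.
Qed.

Lemma Sm_factor B X Y (f : mor X Y) (h : mor B Y) (k : mor (So S B) (So S X)) :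
  Sm S h = cmp (Sm S f) k -> exists k0 : mor B X, h = cmp f k0.
Proof.
move=> hfk; exists (tr (ISo S B) (ISo S X) (Im S k)).
by rewrite -(ISm S h) hfk Im_comp (tr_cmp _ (ISo S X)) ISm.
Qed.

(* Hom(B, Sigma Y) is identified with Hom(Sigma^-1 B, Y), naturally in Y. *)
Definition lift_mor B X (k : mor (Io S B) X) : mor B (So S X) :=
  tr (SIo S B) (erefl (So S X)) (Sm S k).

Lemma lift_mor_surj B Y (h : mor B (So S Y)) :
  exists k : mor (Io S B) Y, h = lift_mor k.
Proof.
exists (tr (erefl (Io S B)) (ISo S Y) (Im S h)).
rewrite /lift_mor Sm_tr tr_tr /=.
by rewrite (proof_irrelevance _ (f_equal (So S) (ISo S Y)) (SIo S (So S Y))) SIm.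
Qed.

Lemma lift_mor_cmp B X Y (g : mor X Y) (k : mor (Io S B) X) :
  lift_mor (cmp g k) = cmp (Sm S g) (lift_mor k).
Proof. by rewrite /lift_mor Sm_comp (tr_cmp _ (erefl (So S X))). Qed.

Lemma lift_mor_eq0 B X (k : mor (Io S B) X) : lift_mor k = 0 -> k = 0.
Proof. by move/tr_eq0/Sm_eq0. Qed.

Lemma hom_exact_Sm X Y W (f : mor X Y) (g : mor Y W) :
  hom_exact f g -> hom_exact (Sm S f) (Sm S g).
Proof.
move=> fg_exact B; split=> [h|h].
  have [gf0 _] := fg_exact X.
  by rewrite cmpA -Sm_comp -[cmp g f]compm1 -cmpA gf0 Sm0 cmp0m.
have [k ->] := lift_mor_surj h; rewrite -lift_mor_cmp => /lift_mor_eq0 gk0.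
have [_ ker] := fg_exact (Io S B); have [k0 ->] := ker _ gk0.
by exists (lift_mor k0); rewrite lift_mor_cmp.
Qed.

End Automorphism.

Lemma hom_exact_iterm (C : addcat) (Fo : obj C -> obj C)
    (Fm : forall X Y : obj C, mor X Y -> mor (Fo X) (Fo Y)) :
  (forall X Y W (f : mor X Y) (g : mor Y W),
     hom_exact f g -> hom_exact (Fm _ _ f) (Fm _ _ g)) ->
  forall k X Y W (f : mor X Y) (g : mor Y W),
    hom_exact f g -> hom_exact (iterm Fm k f) (iterm Fm k g).
Proof. by move=> Fexact; elim=> [|k IHk] //= X Y W f g /IHk; apply: Fexact. Qed.

Lemma hom_exact_powm (C : addcat) (S : autom C) (i : int) (X Y W : obj C)
    (f : mor X Y) (g : mor Y W) :
  hom_exact f g -> hom_exact (powm S i f) (powm S i g).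
Proof.
case: i => k; apply: hom_exact_iterm.
  exact: hom_exact_Sm.
exact: (hom_exact_Sm (inv_autom S)).
Qed.

Section Chains.
Variable C : addcat.
Implicit Types X Y Z W : obj C.

Definition chead Z X m (c : chain Z X m.+1) : mor X (projT1 (chain_dec c)) :=
  (projT2 (chain_dec c)).1.

Definition ctail Z X m (c : chain Z X m.+1) : chain Z (projT1 (chain_dec c)) m :=
  (projT2 (chain_dec c)).2.

Lemma chain_eta Z X m (c : chain Z X m.+1) : c = ccons (chead c) (ctail c).
Proof.
suff: forall k (c : chain Z X k), match k return chain Z X k -> Prop with
  | 0 => fun _ => True
  | k.+1 => fun c => c = ccons (chead c) (ctail c) end c by move/(_ m.+1 c).
by move=> k [].
Qed.

Lemma ladder_chead Z Z' X X' m (p : chain Z X m.+1) (q : chain Z' X' m.+1)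
    (phi : mor X X') (chi : mor Z Z') :
  ladder p q phi chi -> exists psi, cmp psi (chead p) = cmp (chead q) phi.
Proof.
suff: forall k (p : chain Z X k) (q : chain Z' X' k), ladder p q phi chi ->
    match k return chain Z X k -> chain Z' X' k -> Prop with
    | 0 => fun _ _ => True
    | k.+1 => fun p q => exists psi, cmp psi (chead p) = cmp (chead q) phi end p q.
  by move=> gen /gen.
by move=> k p' q' [] //= *; eexists; eassumption.
Qed.

Variable P : forall X Y W, mor X Y -> mor Y W -> Prop.

Lemma cpairs_impl (Q : forall X Y W, mor X Y -> mor Y W -> Prop) Z X m
    (c : chain Z X m) :
  (forall X Y W (f : mor X Y) (g : mor Y W), P f g -> Q _ _ _ f g) ->
  cpairs P c -> cpairs Q c.
Proof. by move=> PQ; elim=> *; constructor; auto. Qed.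

Fixpoint cpairs_upto (j : nat) W X Z m (c : chain Z X m) {struct c}
    : mor W X -> Prop :=
  match c in chain _ X' _ return mor W X' -> Prop with
  | cnil => fun _ => True
  | ccons _ _ _ g c' => fun f =>
      if j is j'.+1 then P f g /\ cpairs_upto j' c' g else True
  end.

Lemma cpairs_upto_full j W X Z m (f : mor W X) (c : chain Z X m) :
  (m <= j)%N -> cpairs_upto j c f -> cpairs P (ccons f c).
Proof.
elim: c j W f => [|? ? ? g c IHc] [|j] //= W f mj; try by constructor.
by case=> Pfg Pc; constructor; last exact: IHc Pc.
Qed.

Lemma cpairs_upto_snoc j W X Z Z' m (f : mor W X) (c : chain Z X m)
    (b : mor Z Z') :
  cpairs_upto j (snoc c b) f -> cpairs_upto j c f.
Proof.
elim: c j W f => [|? ? ? g c IHc] [|j] //= W f.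
by case=> Pfg Pc; split; last exact: IHc Pc.
Qed.

Lemma cpairs_upto_snoc_last j W X Z Z' m (f : mor W X) (c : chain Z X m)
    (b b' : mor Z Z') :
  (forall U (x : mor U Z), P x b -> P x b') ->
  cpairs_upto j (snoc c b) f -> cpairs_upto j (snoc c b') f.
Proof.
move=> Pbb'; elim: c j W f => [|? ? ? g c IHc] [|j] //= W f.
  by case=> Pfb; split => //; apply: Pbb'.
by case=> Pfg Pc; split; last exact: IHc Pc.
Qed.

End Chains.

Section ExactnessOfSequences.
Variables (C : addcat) (S : autom C) (m : nat) (N : sseq S m.+1 -> Prop).
Hypothesis N1b : forall A : obj C, N (trivseq S m A).
Hypothesis N2s : forall s, N s -> N (rotate s).
Hypothesis N3 : forall a b, N a -> N b ->
  forall (phi1 : mor (s1 a) (s1 b)) (phi2 : mor (s2 a) (s2 b)),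
    cmp phi2 (sa1 a) = cmp (sa1 b) phi1 -> extends_to_morphism a b phi1 phi2.

Lemma cmp_chead_sa1 s : N s -> cmp (chead (srest s)) (sa1 s) = 0.
Proof.
move=> Ns.
have [phin [ladder_s _]] :=
  N3 (N1b (s1 s)) Ns (phi1 := idm (s1 s)) (phi2 := sa1 s) erefl.
have [psi /= <-] := ladder_chead ladder_s.
exact: cmpm0.
Qed.

Lemma factor_through_sa1 s B (h : mor B (s2 s)) :
  N s -> cmp (chead (srest s)) h = 0 -> exists k : mor B (s1 s), h = cmp (sa1 s) k.
Proof.
move=> Ns h0.
have [phin [_ /= square]] := N3 (N2s (N1b B)) (N2s Ns) (phi1 := h) (phi2 := 0)
  (etrans (cmp0m _ _) (esym h0)).
apply: (Sm_factor (k := phin)); move: square.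
rewrite Sm_id !mulrz_sign; case: (odd _).
  by rewrite cmpmN cmpNm compm1 => /oppr_inj.
by rewrite compm1.
Qed.

Lemma exact_at_sa1 s B : N s -> exact_at B (sa1 s) (chead (srest s)).
Proof.
move=> Ns; split; last by move=> h; apply: factor_through_sa1.
by move=> h; rewrite cmpA cmp_chead_sa1 // cmp0m.
Qed.

(* The pairs of s after the first one are the first pairs of rotate s, except
   that the last of them carries a sign. *)
Lemma exact_ext_chain_upto j s : N s ->
  cpairs_upto (@hom_exact C) j
    (snoc (snoc (srest s) (san s)) (Sm S (sa1 s))) (sa1 s).
Proof.
elim: j s => [|j IHj] s Ns; rewrite (chain_eta (srest s)) //=.
split; first by move=> B; apply: exact_at_sa1.
apply: (cpairs_upto_snoc_last (b := Sm S (sa1 s) *~ ((-1) ^+ m.+3 : int))).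
  by move=> U x rot_exact B; apply: exact_at_signr (rot_exact B).
exact: cpairs_upto_snoc (IHj _ (N2s Ns)).
Qed.

Lemma exact_ext_chain s : N s -> cpairs (@hom_exact C) (ext_chain s).
Proof.
by move=> Ns; apply: (cpairs_upto_full (j := m.+3)) (exact_ext_chain_upto _ Ns).
Qed.

End ExactnessOfSequences.

Local Close Scope ring_scope.

Theorem lemma3p1 (C : addcat) (S : autom C) (m : nat)
  (N : sseq S m.+1 -> Prop)
  (N1b : forall A : obj C, N (trivseq S m A))
  (N2s : forall s, N s -> N (rotate s))
  (N3 : forall a b, N a -> N b ->
     forall (phi1 : mor (s1 a) (s1 b)) (phi2 : mor (s2 a) (s2 b)),
       cmp phi2 (sa1 a) = cmp (sa1 b) phi1 ->
       extends_to_morphism a b phi1 phi2) :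
  forall s, N s -> exact_sseq s.
Proof.
move=> s Ns i B.
apply: cpairs_impl (exact_ext_chain N1b N2s N3 Ns) => X Y W f g fg_exact.
exact: hom_exact_powm.
Qed.
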